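(* Let $f:X\to Y$, let $\langle P,I,C\rangle$ be an analytic template over $f$ (for modeling language $\mathcal M$, with predicates $P_X,P_Y,P_f$), and let $f^\uparrow:\mathrm{Var}(X)\to\mathrm{Var}(Y)$ be any function. If the template $\langle P,I,C\rangle$ is valid, then the lifted analytic template induced by $f^\uparrow$ is valid, i.e. for every $\mathbf M\in\mathrm{Var}(\mathcal M)$, every $\phi\in\mathtt{Prop}(F)$, every $\mathbf x\in\mathrm{Var}(X)$ with $\mathsf{Inv}(C,\langle\mathbf x,\mathbf M\rangle,\phi)$, and every $\mathfrak c\in[\![\Phi\wedge\phi]\!]$, we have $I^\uparrow_\phi(\mathbf x)|_{\mathfrak c}\prec\langle\mathbf M|_{\mathfrak c},P\rangle$.
   Context: Product lines: a finite feature set $F$, feature model $\Phi\in\mathtt{Prop}(F)$ (propositional formulas over $F$); configurations $\mathfrak c\subseteq F$, $\mathfrak c\models\phi$ propositional satisfaction, $[\![\phi]\!]=\{\mathfrak c:\mathfrak c\models\phi\}$. For a set $X$, $\mathrm{Var}(X)$ is a set of product lines over $X$ with derivation $\mathbf x|_{\mathfrak c}\in X$ for valid $\mathfrak c$; pairs derive componentwise. $\mathsf{Inv}(Q,\mathbf x,\phi)$ means $\forall\mathfrak c\in[\![\Phi]\!],\ \mathfrak c\models\phi\Rightarrow Q(\mathbf x|_{\mathfrak c})$. Goals: propositional $p$, or predicative $\langle M,Q\rangle$ asserting $Q(M)$; $\{g_1,\dots,g_n\}\prec g$ ($n\ge1$) means $(\bigwedge g_i)\Rightarrow g$. A template over $\mathcal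 M$ with domain $D$ is $\langle P,I,C\rangle$, $P:\mathcal M\to\{\top,\bot\}$, $I:D\to$ finite sets of goals, $C:D\times\mathcal M\to\{\top,\bot\}$; valid iff $\forall x,M,\ C(x,M)\Rightarrow I(x)\prec\langle M,P\rangle$. An analytic template over $f:X\to Y$ is a template over $\mathcal M$ with domain $X$ whose instantiation is $I(x)=\{\langle x,P_X\rangle,\ \langle f(x),P_Y\rangle,\ g_f\}$ where $P_X$ is a predicate on $X$, $P_Y$ a predicate on $Y$, $P_f$ a predicate on $X\times Y$, and $g_f$ is the proposition $\forall x'\in X,\ P_f(x',f(x'))$. Variational goals: $\langle p,\phi\rangle$ or $\langle\mathbf z,Q,\phi\rangle$ with $\mathbf z$ a product line, presence condition $\mathtt{pc}=\phi$; derivation for $\mathfrak c\in[\![\Phi\wedge\phi]\!]$: $\langle p,\phi\rangle|_{\mathfrak c}=p$, $\langle\mathbf z,Q,\phi\rangle|_{\mathfrak c}=\langle\mathbf z|_{\mathfrak c},Q\rangle$; for a finite set $\mathbf G$ of variational goals, $\mathbf G|_{\mathfrak c}=\{\mathbf g|_{\mathfrak c}:\mathbf g\in\mathbf G,\ \mathfrak c\models\mathtt{pc}(\mathbf g)\}$. The lifted analytic template induced by $f^\uparrow$ has, for parent presence condition $\phi$, instantiation $I^\uparrow_\phi(\mathbf x)=\{\langle\mathbf x,P_X,\phi\rangle,\ \langle f^\uparrow(\mathbf x),P_Y,\phi\rangle,\ \langle g_f,\phi\rangle,\ \langle g_{\mathsf{Lift}},\phi\rangle\}$ where $g_{\mathsf{Lift}}$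 is the proposition $\forall\mathbf x'\in\mathrm{Var}(X),\forall\mathfrak c\in[\![\Phi]\!],\ f^\uparrow(\mathbf x')|_{\mathfrak c}=f(\mathbf x'|_{\mathfrak c})$; its parent predicate $P$ and correctness criterion $C$ are those of the original template. *)

From mathcomp Require Import all_boot.
Set Implicit Arguments.
Unset Strict Implicit.
Unset Printing Implicit Defensive.

Inductive pform (F : Type) : Type :=
| PTrue | PFalse
| PVar of F
| PNot of pform F
| PAnd of pform F & pform F
| POr of pform F & pform F
| PImp of pform F & pform F.
Arguments PTrue {F}. Arguments PFalse {F}.

Fixpoint sat (F : finType) (c : {set F}) (p : pform F) : bool :=
  match p with
  | PTrue => true
  | PFalse => false
  | PVar a => a \in c
  | PNot q => ~~ sat c q
  | PAnd q r => sat c q && sat c r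
  | POr q r => sat c q || sat c r
  | PImp q r => sat c q ==> sat c r
  end.

Inductive goal : Type :=
| GProp (p : Prop)
| GPred (T : Type) (m : T) (Q : T -> Prop).

Definition goal_holds (g : goal) : Prop :=
  match g with
  | GProp p => p
  | GPred _ m Q => Q m
  end.

(* {g_1,...,g_n} ≺ g  (n >= 1): finite sets of goals are represented by lists *)
Definition prec (gs : seq goal) (g : goal) : Prop :=
  gs <> [::] /\ (foldr (fun g' acc => goal_holds g' /\ acc) True gs -> goal_holds g).

Record template (Mdl D : Type) : Type := Template {
  tP : Mdl -> Prop;
  tI : D -> seq goal;
  tC : D -> Mdl -> Prop }.

Definition template_valid (Mdl D : Type) (t : template Mdl D) : Prop :=
  forall (x : D) (M : Mdl), tC t x M -> prec (tI t x) (GPred M (tP t)).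

Definition g_f (X Y : Type) (f : X -> Y) (Pf : X -> Y -> Prop) : Prop :=
  forall x' : X, Pf x' (f x').

Definition analytic_template (Mdl X Y : Type) (f : X -> Y)
    (P : Mdl -> Prop) (C : X -> Mdl -> Prop)
    (PX : X -> Prop) (PY : Y -> Prop) (Pf : X -> Y -> Prop) : template Mdl X :=
  Template P (fun x => [:: GPred x PX; GPred (f x) PY; GProp (g_f f Pf)]) C.

(* A product-line framework is given by a feature set F, a feature model Phi,
   a type family Var and derivation functions  derive X : Var X -> {set F} -> X
   (only the values at valid configurations c ⊨ Phi are ever used). *)

(* Inv(C, <x, M>, phi), with pairs deriving componentwise *)
Definition Inv (F : finType) (Phi : pform F) (Var : Type -> Type)
    (derive : forall T : Type, Var T -> {set F} -> T)
    (X Mdl : Type) (C : X -> Mdl -> Prop) (x : Var X) (M : Var Mdl) (phi : pform F)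
  : Prop :=
  forall c : {set F}, sat c Phi -> sat c phi -> C (derive X x c) (derive Mdl M c).

Inductive vgoal (F : Type) (Var : Type -> Type) : Type :=
| VGProp (p : Prop) (phi : pform F)
| VGPred (T : Type) (z : Var T) (Q : T -> Prop) (phi : pform F).

Definition vpc (F : Type) (Var : Type -> Type) (g : vgoal F Var) : pform F :=
  match g with
  | VGProp _ phi => phi
  | VGPred _ _ _ phi => phi
  end.

Definition vderive (F : finType) (Var : Type -> Type)
    (derive : forall T : Type, Var T -> {set F} -> T)
    (c : {set F}) (g : vgoal F Var) : goal :=
  match g with
  | VGProp p _ => GProp p
  | VGPred T z Q _ => GPred (derive T z c) Q
  end.

Definition vderive_set (F : finType) (Var : Type -> Type)
    (derive : forall T : Type, Var T -> {set F} -> T)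
    (c : {set F}) (G : seq (vgoal F Var)) : seq goal :=
  map (vderive derive c) (filter (fun g => sat c (vpc g)) G).

Definition g_Lift (F : finType) (Phi : pform F) (Var : Type -> Type)
    (derive : forall T : Type, Var T -> {set F} -> T)
    (X Y : Type) (f : X -> Y) (fup : Var X -> Var Y) : Prop :=
  forall (x' : Var X) (c : {set F}), sat c Phi -> derive Y (fup x') c = f (derive X x' c).

Definition lifted_inst (F : finType) (Phi : pform F) (Var : Type -> Type)
    (derive : forall T : Type, Var T -> {set F} -> T)
    (X Y : Type) (f : X -> Y) (fup : Var X -> Var Y)
    (PX : X -> Prop) (PY : Y -> Prop) (Pf : X -> Y -> Prop)
    (phi : pform F) (x : Var X) : seq (vgoal F Var) :=
  [:: VGPred x PX phi; VGPred (fup x) PY phi;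
      VGProp Var (g_f f Pf) phi; VGProp Var (g_Lift Phi derive f fup) phi].

From mathcomp Require Import all_boot.

Set Implicit Arguments.
Unset Strict Implicit.

(* At a configuration satisfying the parent presence condition, the lifted
   instantiation derives to the original one at x|_c plus the goal g_Lift;
   g_Lift rewrites f^up(x)|_c into f(x|_c), so validity of the original
   template at <x|_c, M|_c> applies. *)

Lemma vderive_lifted_inst (F : finType) (Phi : pform F) (Var : Type -> Type)
    (derive : forall T : Type, Var T -> {set F} -> T)
    (X Y : Type) (f : X -> Y) (fup : Var X -> Var Y)
    (PX : X -> Prop) (PY : Y -> Prop) (Pf : X -> Y -> Prop)
    (phi : pform F) (x : Var X) (c : {set F}) :
  sat c phi ->
  vderive_set derive c (lifted_inst Phi derive f fup PX PY Pf phi x)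
  = [:: GPred (derive X x c) PX; GPred (derive Y (fup x) c) PY;
        GProp (g_f f Pf); GProp (g_Lift Phi derive f fup)].
Proof. by move=> phi_c; rewrite /vderive_set /lifted_inst /= phi_c. Qed.

Lemma analytic_inst_lifted_holds (F : finType) (Phi : pform F)
    (Var : Type -> Type) (derive : forall T : Type, Var T -> {set F} -> T)
    (Mdl X Y : Type) (f : X -> Y) (P : Mdl -> Prop) (C : X -> Mdl -> Prop)
    (PX : X -> Prop) (PY : Y -> Prop) (Pf : X -> Y -> Prop)
    (fup : Var X -> Var Y) (x : Var X) (c : {set F}) :
  sat c Phi -> PX (derive X x c) -> PY (derive Y (fup x) c) ->
  g_f f Pf -> g_Lift Phi derive f fup ->
  foldr (fun g acc => goal_holds g /\ acc) True
        (tI (analytic_template f P C PX PY Pf) (derive X x c)).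
Proof. by move=> Phi_c PXx PYfx gf /(_ x c Phi_c) lift_x; rewrite /= -lift_x. Qed.

Theorem theorem4p3
  (F : finType) (Phi : pform F) (Var : Type -> Type)
  (derive : forall T : Type, Var T -> {set F} -> T)
  (Mdl X Y : Type) (f : X -> Y)
  (P : Mdl -> Prop) (C : X -> Mdl -> Prop)
  (PX : X -> Prop) (PY : Y -> Prop) (Pf : X -> Y -> Prop)
  (fup : Var X -> Var Y) :
  template_valid (analytic_template f P C PX PY Pf) ->
  forall (M : Var Mdl) (phi : pform F) (x : Var X),
    Inv Phi derive C x M phi ->
    forall c : {set F}, sat c (PAnd Phi phi) ->
      prec (vderive_set derive c (lifted_inst Phi derive f fup PX PY Pf phi x))
           (GPred (derive Mdl M c) P).
Proof.
move=> valid M phi x inv c /= /andP[Phi_c phi_c].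
rewrite vderive_lifted_inst //; split=> // -[PXx [PYfx [gf [lift _]]]].
have [_ orig_prec] := valid _ _ (inv c Phi_c phi_c).
apply: orig_prec.
exact: analytic_inst_lifted_holds Phi_c PXx PYfx gf lift.
Qed.
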